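(* Let $h=z+\sum_{l\ge1}h_lz^{-l}$ be a formal Laurent series with complex coefficients $h_l$, put $\lambda=z^2$, and let $H^{(k)}$ and $V^{(j)}$ be as defined in the context below. Then for every integer $k\ge0$: (1) the entries of $V^{(2k+1)}$ are polynomials in $\lambda$ whose coefficients depend only on $(h_1,\dots,h_{2k+1})$, and the map $(h_1,\dots,h_{2k+1})\mapsto V^{(2k+1)}$ is injective; (2) $\mathrm{Tr}\,V^{(2k+1)}=0$; (3) for every integer $0\le i\le k$, $$V^{(2i+1)}=\big(\lambda^{i-k}V^{(2k+1)}\big)_+-\alpha_{ik}\begin{pmatrix}0&0\\1&0\end{pmatrix},$$ where $(\cdot)_+$ denotes the projection onto the nonnegative powers of $\lambda$ (applied entrywise), and $\alpha_{ik}$ is the $(1,2)$ entry of the coefficient of $\lambda^{k-i-1}$ in $V^{(2k+1)}$ (the coefficient of $\lambda^{-1}$ being $0$).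
   Context: Given $h=z+\sum_{l\ge1}h_lz^{-l}$, define Laurent series $H^{(k)}$, $k\ge0$, by $H^{(0)}=1$, $H^{(1)}=h$, $H^{(2)}=z^2$ and recursively $H^{(k+2)}=z^2H^{(k)}-H^k_1H^{(1)}-H^k_2$ for $k\ge1$, where $H^k_l$ denotes the coefficient of $z^{-l}$ in $H^{(k)}$ (so $H^{(k)}=z^k+\sum_{l\ge1}H^k_lz^{-l}$ and $H^1_l=h_l$). Every $H^{(k)}$, and every series $H^{(j+1)}+\sum_{l=1}^jh_lH^{(j-l)}+H^j_1$, can be written uniquely as $a(\lambda)+b(\lambda)h$ with $a,b$ polynomials in $\lambda=z^2$ (uniqueness because the elements $\lambda^j,\lambda^jh$, $j\ge0$, are linearly independent). For $j\ge1$, $V^{(j)}$ is the $2\times2$ matrix with polynomial entries in $\lambda$ whose first row is $(p_j,q_j)$, where $H^{(j)}=p_j(\lambda)+q_j(\lambda)h$, and whose second row is $(a_j,b_j)$, where $H^{(j+1)}+\sum_{l=1}^jh_lH^{(j-l)}+H^j_1=a_j(\lambda)+b_j(\lambda)h$. Equivalently, $V^{(j)}$ is defined by $\big(\partial_{t_j}+H^{(j)}\big)(1,h)^T=V^{(j)}(1,h)^T$, where $\partial h/\partial t_j=-hH^{(j)}+H^{(j+1)}+\sum_{l=1}^jh_lH^{(j-l)}+H^j_1$. For example $V^{(1)}=\begin{pmatrix}0&1\\ \lambda+2h_1&0\end{pmatrix}$. *)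

From HB Require Import structures.
From mathcomp Require Import all_boot all_algebra.
From mathcomp Require Import reals.
From mathcomp Require Export complex.
From Stdlib Require Import ClassicalEpsilon.

Set Implicit Arguments.
Unset Strict Implicit.
Unset Printing Implicit Defensive.

Import GRing.Theory Num.Theory.
Local Open Scope ring_scope.

Section Laurent.
Variable R : realType.
Local Notation C := (R[i]).

(* A Laurent series in z is represented by its coefficient function:
   [s n] is the coefficient of z^n (n : int).  All series below have
   support bounded above; only shifts and finite linear combinations
   are ever used, so no infinite sums arise. *)
Definition series := int -> C.

Definition sadd (s t : series) : series := fun n => s n + t n.
Definition sscale (c : C) (s : series) : series := fun n => c * s n.
Definition smono (m : int) : series := fun n => if n == m then 1 else 0.
Definition sz2 (s : series) : series := fun n => s (n - 2).

(* h = z + \sum_{l>=1} h_l z^{-l}; hc l = h_l (hc 0 is irrelevant). *)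
Definition hser (hc : nat -> C) : series :=
  fun n => match n with
           | Posz 1 => 1
           | Posz _ => 0
           | Negz m => hc m.+1   (* Negz m = -(m+1) *)
           end.

Definition coefneg (s : series) (l : nat) : C := s (- (l%:Z)).

Fixpoint Hser (hc : nat -> C) (k : nat) : series :=
  match k with
  | 0 => smono 0
  | 1 => hser hc
  | k'.+2 =>
      if k' is 0 then smono 2
      else sadd (sz2 (Hser hc k'))
             (sadd (sscale (- coefneg (Hser hc k') 1) (hser hc))
                   (sscale (- coefneg (Hser hc k') 2) (smono 0)))
  end.

(* the series p(lambda), lambda = z^2 *)
Definition spoly (p : {poly C}) : series :=
  fun n => match n with
           | Posz m => if odd m then 0 else p`_(m./2)
           | Negz _ => 0
           end.

Definition spolymul (p : {poly C}) (s : series) : series :=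
  fun n => \sum_(i < size p) p`_i * s (n - (2 * i)%N%:Z).

Definition repr_ab (hc : nat -> C) (a b : {poly C}) (s : series) : Prop :=
  forall n : int, s n = spoly a n + spolymul b (hser hc) n.

Definition row2ser (hc : nat -> C) (j : nat) : series :=
  sadd (Hser hc j.+1)
   (sadd (fun n => \sum_(1 <= l < j.+1) hc l * Hser hc (j - l) n)
         (sscale (coefneg (Hser hc j) 1) (smono 0))).

Definition isV (hc : nat -> C) (j : nat) (M : 'M[{poly C}]_2) : Prop :=
  repr_ab hc (M 0 0) (M 0 1) (Hser hc j) /\
  repr_ab hc (M 1 0) (M 1 1) (row2ser hc j).

(* V^{(j)}: the (unique) matrix with the defining property. *)
Definition Vmat (hc : nat -> C) (j : nat) : 'M[{poly C}]_2 :=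
  epsilon (inhabits 0) (isV hc j).

Definition posproj (d : nat) (M : 'M[{poly C}]_2) : 'M[{poly C}]_2 :=
  map_mx (drop_poly d) M.

Definition alpha (hc : nat -> C) (i k : nat) : C :=
  if (i < k)%N then ((Vmat hc k.*2.+1) 0 1)`_(k - i).-1 else 0.

Definition E21 : 'M[{poly C}]_2 := \matrix_(a < 2, b < 2)
  (if (a == 1 :> nat) && (b == 0 :> nat) then 1 else 0).

End Laurent.

(* The map (a, b) |-> a(λ) + b(λ) h is injective already on the nonnegative
   powers of z: the odd ones determine b, then the even ones determine a.  So
   V^(j) is pinned down by the nonnegative parts of H^(j), which is z^j, and of
   the second-row series, which is the nonnegative part
   z^(j+1) + Σ_(l<=j) h_l z^(j-l) + H^j_1 of h H^(j).  Dividing by λ^(k-i)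
   thus turns the rows of V^(2k+1) into those of V^(2i+1), except for the
   constant H^(2i+1)_1 = -α_ik, which the recursion
   H^(j+2) = λ H^(j) - H^j_1 h - H^j_2 exhibits as a coefficient of V^(2i+3).
   The trace vanishes by parity: if H^(2k+1) = P + Q h with P, Q even in z,
   the odd part of h (H^(2k+1) + P) is 2 h_odd H_even, which has only negative
   powers, so the second row of V^(2k+1) has b = -P.  Injectivity is
   triangular: h_(2i+1) enters the constant term of the second row of V^(2i+1)
   as 2 h_(2i+1), and h_(2i+2) the constant term of the (1,1) entry of
   V^(2i+3) as -h_(2i+2), all other terms involving only lower h_l. *)

From mathcomp Require Import all_boot all_algebra.
From mathcomp Require Import reals complex.
From mathcomp Require Import zify ring.
From Stdlib Require Import ClassicalEpsilon.

Import GRing.Theory Num.Theory.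
Local Open Scope ring_scope.

Lemma mx2_ext (T : Type) (A B : 'M[T]_2) :
  A 0 0 = B 0 0 -> A 0 1 = B 0 1 -> A 1 0 = B 1 0 -> A 1 1 = B 1 1 -> A = B.
Proof.
have I2 (x : 'I_2) : x = 0 \/ x = 1 by case: x => [[|[|//]] ?]; [left|right]; apply: val_inj.
by move=> *; apply/matrixP => x y; case: (I2 x) => ->; case: (I2 y) => ->.
Qed.

Lemma mxtrace2 (R : pzRingType) (A : 'M[R]_2) : \tr A = A 0 0 + A 1 1.
Proof.
rewrite /mxtrace big_ord_recl big_ord1.
by have -> : lift ord0 (ord0 : 'I_1) = 1 :> 'I_2 by apply: val_inj.
Qed.

Lemma size_MXsubC (R : nzRingType) (p : {poly R}) c s :
  (size p <= s)%N -> (size (p * 'X - c%:P)%R <= s.+1)%N.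
Proof.
move=> le_p_s; apply: leq_trans (size_polyD _ _) _; rewrite size_polyN geq_max.
rewrite (leq_trans (size_polyC_leq1 _)) // andbT.
by apply: leq_trans (size_polyMleq _ _) _; rewrite size_polyX addn2.
Qed.

Lemma big_ord_support (V : nmodType) (N a b : nat) (F : nat -> V) :
  (a <= b <= N)%N -> (forall i, (i < a)%N || (b <= i)%N -> F i = 0) ->
  \sum_(i < N) F i = \sum_(a <= i < b) F i.
Proof.
move=> /andP[le_ab le_bN] F0; rewrite -(big_mkord xpredT).
rewrite (@big_cat_nat _ _ _ a) ?(leq_trans le_ab) // (@big_cat_nat _ _ _ b a N) //=.
rewrite [X in X + _]big1_seq ?add0r => [|i]; last first.
  by rewrite mem_index_iota => /andP[_ /andP[_ lt_ia]]; apply: F0; rewrite lt_ia.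
rewrite [X in _ + X]big1_seq ?addr0 // => i.
by rewrite mem_index_iota => /andP[_ /andP[le_bi _]]; apply: F0; rewrite le_bi orbT.
Qed.

Section LaurentSeries.
Context {R : realType}.
Local Notation C := R[i].
Implicit Types (a b p q : {poly C}) (s : series R) (hc : nat -> C).

Lemma spolymul_widen p s n N : (size p <= N)%N ->
  spolymul p s n = \sum_(i < N) p`_i * s (n - (2 * i)%N%:Z).
Proof.
move=> le_p_N; rewrite /spolymul (big_ord_widen N (fun i => p`_i * s (n - (2 * i)%N%:Z))) //.
rewrite big_mkcond; apply: eq_bigr => i _; case: ltnP => // le_p_i.
by rewrite nth_default ?mul0r.
Qed.

Lemma spolymulDl p q s n : spolymul (p + q) s n = spolymul p s n + spolymul q s n.
Proof.
set N := maxn (size p) (size q).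
rewrite !(@spolymul_widen _ _ _ N) ?leq_maxl ?leq_maxr ?size_polyD //.
by rewrite -big_split; apply: eq_bigr => i _; rewrite coefD mulrDl.
Qed.

Lemma spolymulZl c p s n : spolymul (c *: p) s n = c * spolymul p s n.
Proof.
rewrite !(@spolymul_widen _ _ _ (size p)) ?size_scale_leq // mulr_sumr.
by apply: eq_bigr => i _; rewrite coefZ mulrA.
Qed.

Lemma spolymulBl p q s n : spolymul (p - q) s n = spolymul p s n - spolymul q s n.
Proof. by rewrite spolymulDl -scaleN1r spolymulZl mulN1r. Qed.

Lemma spolymul0l s n : spolymul 0 s n = 0.
Proof. by rewrite /spolymul size_poly0 big_ord0. Qed.

Lemma spolymulC c s n : spolymul c%:P s n = c * s n.
Proof. by rewrite (@spolymul_widen _ _ _ 1) ?size_polyC_leq1 // big_ord1 coefC subr0. Qed.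

Lemma spolymulMX p s n : spolymul (p * 'X) s n = spolymul p s (n - 2).
Proof.
rewrite (@spolymul_widen _ _ _ (size p).+1); last first.
  by apply: leq_trans (size_polyMleq _ _) _; rewrite size_polyX addn2.
rewrite big_ord_recl coefMX mul0r add0r (@spolymul_widen _ _ _ (size p)) //.
apply: eq_bigr => i _; rewrite coefMX /=; congr (_ * s _); rewrite /bump /=; lia.
Qed.

Lemma spolymul_drop p s n d :
  spolymul p s n = \sum_(i < d) p`_i * s (n - (2 * i)%N%:Z)
                   + spolymul (drop_poly d p) s (n - (2 * d)%N%:Z).
Proof.
rewrite (@spolymul_widen _ _ _ (d + size p)) ?leq_addl // big_split_ord /=; congr (_ + _).
rewrite (@spolymul_widen _ _ _ (size p)) ?size_drop_poly ?leq_subr //.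
apply: eq_bigr => i _; rewrite coef_drop_poly (addnC i d).
by congr (_ * s _); rewrite mulnDr PoszD opprD addrA.
Qed.

Lemma smono0_nat (n : nat) : smono R 0 n = (n == 0)%:R.
Proof. by case: n. Qed.

Lemma smono0_subn (x y : nat) : smono R 0 (x%:Z - y%:Z) = (x == y)%:R.
Proof.
rewrite /smono (_ : x%:Z - y%:Z == 0 = (x == y)); first by case: (x == y).
by apply/eqP/eqP; lia.
Qed.

Lemma smono0_eq0 (x : int) : x != 0 -> smono R 0 x = 0.
Proof. by rewrite /smono => /negbTE ->. Qed.

Lemma spoly_spolymul a n : spoly a n = spolymul a (smono R 0) n.
Proof.
rewrite /spolymul; case: n => [m|m]; last first.
  by rewrite big1 // => i _; rewrite smono0_eq0 ?mulr0 // NegzE; apply/eqP; lia.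
under eq_bigr => i _ do rewrite smono0_subn.
have [odd_m | even_m] /= := boolP (odd m).
  by rewrite odd_m big1 // => i _; rewrite (_ : m == _ = false) ?mulr0 //; apply/eqP; lia.
have m_half : m = (2 * m./2)%N by rewrite mul2n -[LHS]odd_double_half (negbTE even_m).
rewrite (negbTE even_m); have [lt_m_a | le_a_m] := ltnP m./2 (size a); last first.
  rewrite [a`_m./2]nth_default // big1 // => i _.
  rewrite (_ : m == _ = false) ?mulr0 //; apply/eqP => m2i.
  by have := leq_trans (ltn_ord i) le_a_m; lia.
rewrite (bigD1 (Ordinal lt_m_a)) //= big1 ?addr0 => [|i ne_i].
  by rewrite (_ : m == _) ?mulr1 //; apply/eqP.
rewrite (_ : m == _ = false) ?mulr0 //; apply/eqP => m2i; move/eqP: ne_i; apply.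
by apply: val_inj => /=; lia.
Qed.

Variable hc : nat -> C.

Lemma hser_nat (x : nat) : hser hc x = (x == 1)%:R.
Proof. by case: x => [|[|x]]. Qed.

Lemma hser_subn (x y : nat) :
  hser hc (x%:Z - y%:Z) = if (y <= x)%N then ((x - y)%N == 1)%:R else hc (y - x)%N.
Proof.
case: leqP => [le_yx | lt_xy]; first by rewrite subzn // hser_nat.
have -> : x%:Z - y%:Z = Negz (y - x).-1 by rewrite NegzE; lia.
by rewrite /= prednK // subn_gt0.
Qed.

Lemma hser_subn_eq0 (x y : nat) :
  (y <= x)%N -> (x - y)%N != 1%N -> hser hc (x%:Z - y%:Z) = 0.
Proof. by move=> le_yx ne1; rewrite hser_subn le_yx (negbTE ne1). Qed.

Lemma hser_eq0 (x : int) : 0 <= x -> x != 1 -> hser hc x = 0.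
Proof. by case: x => [[|[|x]]|x]. Qed.

Lemma hser_neg (l t : nat) : hser hc (- Posz l.+1 - Posz (2 * t)) = hc (2 * t + l).+1.
Proof. by have -> : - Posz l.+1 - Posz (2 * t) = Negz (2 * t + l) by rewrite NegzE; lia. Qed.

Definition abser a b : series R := fun n => spoly a n + spolymul b (hser hc) n.

Lemma abserE a b n :
  abser a b n = spolymul a (smono R 0) n + spolymul b (hser hc) n.
Proof. by rewrite /abser spoly_spolymul. Qed.

Lemma abserB a b a' b' n :
  abser (a - a') (b - b') n = abser a b n - abser a' b' n.
Proof. by rewrite !abserE !spolymulBl addrACA opprD. Qed.

Lemma abser_subC a b c n : abser (a - c%:P) b n = abser a b n - c * smono R 0 n.
Proof. by rewrite !abserE spolymulBl spolymulC addrAC. Qed.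

Lemma abserMX a b n : abser (a * 'X) (b * 'X) n = abser a b (n - 2).
Proof. by rewrite !abserE !spolymulMX. Qed.

Lemma abserC c d n : abser c%:P d%:P n = c * smono R 0 n + d * hser hc n.
Proof. by rewrite abserE !spolymulC. Qed.

Lemma abser_nat_odd a b (m : nat) :
  abser a b (2 * m).+1 = spolymul b (hser hc) (2 * m).+1.
Proof. by rewrite /abser /spoly /= mul2n odd_double add0r. Qed.

Lemma abser_nat_even a b (m : nat) :
  abser a b (2 * m)%N = a`_m + spolymul b (hser hc) (2 * m)%N.
Proof. by rewrite /abser /spoly mul2n odd_double /= doubleK. Qed.

(* With d = deg b, the coefficient of z^(2d+1) in b(λ) h is lead_coef b,
   as h = z + O(z^-1). *)
Lemma spolymul_hser_odd_eq0 b :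
  (forall m : nat, spolymul b (hser hc) (2 * m).+1 = 0) -> b = 0.
Proof.
move=> odd0; apply/eqP; apply: contraT => b_neq0.
set d := (size b).-1; have size_b : size b = d.+1 by rewrite prednK // size_poly_gt0.
have := odd0 d; rewrite (spolymul_widen _ _ _ _ (eq_leq size_b)).
rewrite big_ord_recr /= big1 => [|i _]; last first.
  rewrite hser_subn_eq0 ?mulr0 //; move: (ltn_ord i) => /=; first lia.
  by move: (nat_of_ord i) => j lt_j; apply/eqP; lia.
rewrite add0r hser_subn leqnSn (_ : _ - _ = 1)%N ?mulr1; last lia.
by move=> lead0; move: b_neq0; rewrite -lead_coef_eq0 lead_coefE -/d lead0 eqxx.
Qed.

Lemma abser_inj a b a' b' :
  (forall n : nat, abser a b n = abser a' b' n) -> a = a' /\ b = b'.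
Proof.
move=> eq_ab; have eq_b : b = b'.
  apply/eqP; rewrite -subr_eq0; apply/eqP; apply: spolymul_hser_odd_eq0 => m.
  by rewrite spolymulBl -(abser_nat_odd a) -(abser_nat_odd a') eq_ab subrr.
split=> //; apply/polyP => m; have := eq_ab (2 * m)%N.
by rewrite !abser_nat_even eq_b => /addIr.
Qed.

Lemma HserSS m n :
  Hser hc m.+2 n = Hser hc m (n - 2) - coefneg (Hser hc m) 1 * hser hc n
                   - coefneg (Hser hc m) 2 * smono R 0 n.
Proof.
case: m => [|m] /=; last by rewrite /sadd /sscale /sz2 !mulNr !addrA.
by rewrite /coefneg /smono subr_eq0 !mul0r !subr0.
Qed.

Lemma Hser_nat m (n : nat) : Hser hc m n = (n == m)%:R.
Proof.
elim/ltn_ind: m n => -[|[|m]] IH n; [exact: smono0_nat | exact: hser_nat |].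
rewrite HserSS smono0_nat hser_nat; case: n => [|[|n]]; last first.
  by rewrite (_ : _ - 2 = n%:Z) ?IH //= ?mulr0 ?subr0 //; lia.
all: by rewrite /coefneg mulr0 subr0 mulr1 subrr.
Qed.

Definition has_repr s := exists a b, forall n, s n = abser a b n.

Lemma has_reprD {s t} : has_repr s -> has_repr t -> has_repr (sadd s t).
Proof.
move=> [a [b rs]] [a' [b' rt]]; exists (a + a'), (b + b') => n.
by rewrite /sadd rs rt !abserE !spolymulDl addrACA.
Qed.

Lemma has_reprZ c {s} : has_repr s -> has_repr (sscale c s).
Proof.
move=> [a [b rs]]; exists (c *: a), (c *: b) => n.
by rewrite /sscale rs !abserE !spolymulZl mulrDr.
Qed.

Lemma has_repr_sum (r : seq nat) (F : nat -> series R) :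
  (forall l, has_repr (F l)) -> has_repr (fun n => \sum_(l <- r) F l n).
Proof.
move=> rF; elim: r => [|x r IH].
  by exists 0, 0 => n; rewrite big_nil abserE !spolymul0l addr0.
have [a [b rx]] := has_reprD (rF x) IH.
by exists a, b => n; rewrite big_cons -rx.
Qed.

Lemma Hser_repr m : has_repr (Hser hc m).
Proof.
elim/ltn_ind: m => -[|[|m]] IH.
- by exists 1, 0 => n; rewrite -[1]polyC1 abserC mul1r mul0r addr0.
- by exists 0, 1 => n; rewrite -[1]polyC1 -[0]polyC0 abserC mul1r mul0r add0r.
have [p [q rm]] := IH m (ltnW (ltnSn m.+1)).
exists (p * 'X - (coefneg (Hser hc m) 2)%:P), (q * 'X - (coefneg (Hser hc m) 1)%:P) => n.
by rewrite HserSS abserB abserMX abserC -rm; ring.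
Qed.

Lemma row2ser_repr j : has_repr (row2ser hc j).
Proof.
apply: has_reprD; first exact: Hser_repr.
apply: has_reprD; last exact: has_reprZ (Hser_repr 0).
apply: (has_repr_sum _ (fun l n => hc l * Hser hc (j - l) n)) => l.
exact: has_reprZ (Hser_repr _).
Qed.

Lemma VmatP j : isV hc j (Vmat hc j).
Proof.
apply: epsilon_spec; have [p [q rH]] := Hser_repr j; have [a [b rr]] := row2ser_repr j.
exists (\matrix_(x < 2, y < 2)
          if x == 0 then (if y == 0 then p else q) else (if y == 0 then a else b)).
by split=> n; rewrite !mxE /=; [exact: rH | exact: rr].
Qed.

Lemma Hser_Vmat j n : Hser hc j n = abser (Vmat hc j 0 0) (Vmat hc j 0 1) n.
Proof. by have [rH _] := VmatP j; apply: rH. Qed.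

Lemma row2ser_Vmat j n :
  row2ser hc j n = abser (Vmat hc j 1 0) (Vmat hc j 1 1) n.
Proof. by have [_ rr] := VmatP j; apply: rr. Qed.

Lemma Vmat_eq j (M : 'M[{poly C}]_2) :
  (forall n : nat, abser (M 0 0) (M 0 1) n = Hser hc j n) ->
  (forall n : nat, abser (M 1 0) (M 1 1) n = row2ser hc j n) ->
  Vmat hc j = M.
Proof.
move=> rH rr.
have [e00 e01] : Vmat hc j 0 0 = M 0 0 /\ Vmat hc j 0 1 = M 0 1.
  by apply: abser_inj => n; rewrite rH Hser_Vmat.
have [e10 e11] : Vmat hc j 1 0 = M 1 0 /\ Vmat hc j 1 1 = M 1 1.
  by apply: abser_inj => n; rewrite rr row2ser_Vmat.
exact: mx2_ext.
Qed.

Lemma row2ser_nat j (n : nat) :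
  row2ser hc j n = (n == j.+1)%:R + (if (n < j)%N then hc (j - n)%N else 0)
                   + coefneg (Hser hc j) 1 * (n == 0)%:R.
Proof.
rewrite /row2ser /sadd /sscale Hser_nat smono0_nat addrA; congr (_ + _ + _).
under eq_bigr => l _ do rewrite Hser_nat.
case: ltnP => [lt_nj | le_jn]; last first.
  rewrite big1_seq // => l /andP[_]; rewrite mem_index_iota => l_in.
  by rewrite (_ : n == _ = false) ?mulr0 //; apply/eqP; lia.
rewrite (bigD1_seq (j - n)%N) ?mem_index_iota ?iota_uniq //=; last by lia.
rewrite subKn ?(ltnW lt_nj) // eqxx mulr1 big1_seq ?addr0 // => l /andP[ne].
rewrite mem_index_iota => l_in; rewrite (_ : n == _ = false) ?mulr0 //.
by apply/eqP => n_eq; move/eqP: ne; apply; lia.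
Qed.

Lemma Vmat_top_rec m :
  Vmat hc m.+2 0 0 = Vmat hc m 0 0 * 'X - (coefneg (Hser hc m) 2)%:P /\
  Vmat hc m.+2 0 1 = Vmat hc m 0 1 * 'X - (coefneg (Hser hc m) 1)%:P.
Proof.
by apply: abser_inj => n; rewrite -Hser_Vmat HserSS abserB abserMX abserC -Hser_Vmat; ring.
Qed.

Lemma size_Vmat_top k :
  (size (Vmat hc k.*2.+1 0 0)%R <= k.+1)%N /\ (size (Vmat hc k.*2.+1 0 1)%R <= k.+1)%N.
Proof.
elim: k => [|k [IH0 IH1]]; last first.
  by have [-> ->] := Vmat_top_rec k.*2.+1; split; apply: size_MXsubC.
have [-> ->] : Vmat hc 1 0 0 = 0 /\ Vmat hc 1 0 1 = 1.
  apply: abser_inj => n; rewrite -Hser_Vmat -[1]polyC1 -[0]polyC0 abserC.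
  by rewrite mul0r add0r mul1r.
by rewrite size_poly0 size_poly1.
Qed.

Lemma lead_Vmat01 k : (Vmat hc k.*2.+1 0 1)`_k = 1.
Proof.
have [_ size_Q] := size_Vmat_top k.
have := Hser_nat k.*2.+1 (2 * k).+1.
rewrite Hser_Vmat abser_nat_odd (spolymul_widen _ _ _ _ size_Q) big_ord_recr /= big1 ?add0r.
  by rewrite hser_subn leqnSn subSnn eqxx mulr1 mul2n eqxx.
move=> t _; rewrite hser_subn_eq0 ?mulr0 //; move: (ltn_ord t) => /=; first lia.
by move: (nat_of_ord t) => j lt_j; apply/eqP; lia.
Qed.

Lemma coefneg_Hser j l N : (size (Vmat hc j 0 1)%R <= N)%N ->
  coefneg (Hser hc j) l.+1 = \sum_(t < N) (Vmat hc j 0 1)`_t * hc (2 * t + l).+1.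
Proof.
move=> size_Q; rewrite /coefneg Hser_Vmat /abser add0r (spolymul_widen _ _ _ _ size_Q).
by apply: eq_bigr => t _; rewrite hser_neg.
Qed.

Lemma abser_drop a b d (n : nat) :
  abser (drop_poly d a) (drop_poly d b) n = abser a b (n + 2 * d)%N.
Proof.
rewrite !abserE (spolymul_drop a _ (n + 2 * d)%N d) (spolymul_drop b _ (n + 2 * d)%N d).
rewrite (_ : _ - _ = n%:Z); last lia.
rewrite !big1 ?add0r // => i _; move: (ltn_ord i); move: (nat_of_ord i) => j lt_j.
  by rewrite hser_eq0 ?mulr0 //; apply/negP; lia.
by rewrite smono0_eq0 ?mulr0 //; apply/negP; lia.
Qed.

Lemma Vmat_top_drop i k : (i <= k)%N ->
  Vmat hc i.*2.+1 0 0 = drop_poly (k - i) (Vmat hc k.*2.+1 0 0) /\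
  Vmat hc i.*2.+1 0 1 = drop_poly (k - i) (Vmat hc k.*2.+1 0 1).
Proof.
move=> le_ik; apply: abser_inj => n; rewrite -Hser_Vmat abser_drop -Hser_Vmat !Hser_nat.
by congr (_%:R); apply/eqP/eqP; lia.
Qed.

Lemma alphaE i k : (i < k)%N -> alpha hc i k = - coefneg (Hser hc i.*2.+1) 1.
Proof.
move=> lt_ik; have [_ top1] := Vmat_top_drop i.+1 k lt_ik.
rewrite /alpha lt_ik (_ : (k - i).-1 = 0 + (k - i.+1))%N; last lia.
rewrite -coef_drop_poly -top1; have [_ ->] := Vmat_top_rec i.*2.+1.
by rewrite coefB coefMX coefC sub0r.
Qed.

Lemma posproj_E21E (V : 'M[{poly C}]_2) d c x y :
  (posproj d V - c%:P *: E21 R) x y =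
  drop_poly d (V x y) - (if (x == 1 :> nat) && (y == 0 :> nat) then c%:P else 0).
Proof. by rewrite /posproj /E21 !mxE; case: ifP; rewrite ?mulr1 ?mulr0. Qed.

Lemma Vmat_posproj i k : (i <= k)%N ->
  Vmat hc i.*2.+1 = posproj (k - i) (Vmat hc k.*2.+1) - (alpha hc i k)%:P *: E21 R.
Proof.
move=> le_ik; have [top0 top1] := Vmat_top_drop i k le_ik.
apply: Vmat_eq => n; rewrite !posproj_E21E /= ?subr0; first by rewrite -top0 -top1 -Hser_Vmat.
rewrite abser_subC abser_drop -row2ser_Vmat !row2ser_nat smono0_nat.
have [lt_ik | le_ki] := ltnP i k; last first.
  have -> : i = k by apply/eqP; rewrite eqn_leq le_ik le_ki.
  by rewrite subnn muln0 addn0 /alpha ltnn mul0r subr0.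
rewrite alphaE // mulNr opprK (_ : (n + 2 * (k - i) == 0)%N = false); last first.
  by apply/negP => /eqP; lia.
have -> : (n + 2 * (k - i) == k.*2.+2)%N = (n == i.*2.+2)%N by apply/eqP/eqP; lia.
have -> : (n + 2 * (k - i) < k.*2.+1)%N = (n < i.*2.+1)%N by apply/idP/idP; lia.
by rewrite (_ : k.*2.+1 - _ = i.*2.+1 - n)%N ?mulr0 ?addr0 //; lia.
Qed.

Section ParityConvolution.
Variables t m : nat.

Let g1 i := hser hc ((2 * i).+1%:Z - (2 * t)%:Z) * hser hc ((2 * m)%:Z - (2 * i)%:Z).
Let g2 i := hser hc ((2 * i)%:Z - (2 * t)%:Z) * hser hc ((2 * m).+1%:Z - (2 * i)%:Z).

(* Since z is the only nonnegative power in h, only the terms with m < i <= t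
   survive on the left and those with m <= i < t on the right; i |-> m + t - i
   matches them. *)
Lemma hser_conv_parity N : (t < N)%N -> \sum_(i < N) g1 i = \sum_(i < N) g2 i.
Proof.
move=> lt_tN.
have g1_eq0 i : ~~ (m < i <= t)%N -> g1 i = 0.
  rewrite negb_and -!ltnNge => /orP[le_im | lt_ti].
    by rewrite /g1 [X in _ * X]hser_subn_eq0 ?mulr0 //; apply/eqP; lia.
  by rewrite /g1 hser_subn_eq0 ?mul0r //; apply/eqP; lia.
have g2_eq0 i : ~~ (m <= i < t)%N -> g2 i = 0.
  rewrite negb_and -!ltnNge => /orP[lt_im | le_ti].
    by rewrite /g2 [X in _ * X]hser_subn_eq0 ?mulr0 //; apply/eqP; lia.
  by rewrite /g2 hser_subn_eq0 ?mul0r //; apply/eqP; lia.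
have [le_tm | lt_mt] := leqP t m.
  by rewrite !big1 // => i _; [apply: g2_eq0 | apply: g1_eq0]; apply/negP; lia.
rewrite (@big_ord_support _ N m.+1 t.+1) => [||i out_i];
  [|lia|by apply: g1_eq0; apply/negP; lia].
rewrite (@big_ord_support _ N m t) => [||i out_i];
  [|lia|by apply: g2_eq0; apply/negP; lia].
rewrite big_add1 /= (big_nat_rev _ _ m t); apply: eq_big_nat => i /andP[le_mi lt_it].
by rewrite /g1 /g2 mulrC; congr (hser hc _ * hser hc _); lia.
Qed.

End ParityConvolution.

(* The left side is the coefficient of z^(2m+1) in h_odd H_even, where
   H = P + Q h; it vanishes since that product has only negative powers. *)
Lemma top_row_odd_coef (P Q : {poly C}) k :
  (size P <= k.+1)%N -> (size Q <= k.+1)%N ->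
  (forall n : nat, abser P Q n = (n == k.*2.+1)%:R) ->
  forall m : nat, hser hc ((2 * m)%:Z - (2 * k)%:Z) + spolymul P (hser hc) (2 * m).+1 = 0.
Proof.
move=> size_P size_Q PQ m.
have Q_odd i : \sum_(t < k.+1) Q`_t * hser hc ((2 * i).+1%:Z - (2 * t)%:Z) = (i == k)%:R.
  have := PQ (2 * i).+1; rewrite abser_nat_odd (spolymul_widen _ _ _ _ size_Q) => ->.
  by congr (_%:R); apply/eqP/eqP; lia.
have P_even i : P`_i = - \sum_(t < k.+1) Q`_t * hser hc ((2 * i)%:Z - (2 * t)%:Z).
  have := PQ (2 * i)%N; rewrite abser_nat_even (spolymul_widen _ _ _ _ size_Q).
  by rewrite (_ : (2 * i)%N == _ = false) => [/eqP|]; [rewrite addr_eq0 => /eqP | apply/eqP; lia].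
have -> : hser hc ((2 * m)%:Z - (2 * k)%:Z) =
    \sum_(i < k.+1) (i == k :> nat)%:R * hser hc ((2 * m)%:Z - (2 * i)%:Z).
  by rewrite big_ord_recr /= eqxx mul1r big1 ?add0r // => i _; rewrite ltn_eqF ?mul0r.
rewrite (spolymul_widen _ _ _ _ size_P) -big_split /=.
under eq_bigr => i _ do rewrite -Q_odd P_even mulNr !mulr_suml -sumrN -big_split /=.
rewrite exchange_big big1 //= => t _.
under eq_bigr => i _ do rewrite -!mulrA -mulrN -mulrDr.
by rewrite -mulr_sumr sumrB hser_conv_parity ?subrr ?mulr0.
Qed.

Lemma Vmat11 k : Vmat hc k.*2.+1 1 1 = - Vmat hc k.*2.+1 0 0.
Proof.
have [size_P size_Q] := size_Vmat_top k.
have top_nat (n : nat) :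
    abser (Vmat hc k.*2.+1 0 0) (Vmat hc k.*2.+1 0 1) n = (n == k.*2.+1)%:R.
  by rewrite -Hser_Vmat Hser_nat.
apply/eqP; rewrite -addr_eq0; apply/eqP; apply: spolymul_hser_odd_eq0 => m.
rewrite spolymulDl -(abser_nat_odd (Vmat hc k.*2.+1 1 0)) -row2ser_Vmat row2ser_nat.
rewrite -[RHS](top_row_odd_coef _ _ _ size_P size_Q top_nat m); congr (_ + _).
rewrite (_ : (2 * m).+1 == k.*2.+2 = false); last by apply/eqP; lia.
rewrite mulr0 addr0 add0r hser_subn.
rewrite (_ : ((2 * m).+1 < k.*2.+1)%N = (m < k)%N); last by apply/idP/idP; lia.
rewrite (_ : (2 * k <= 2 * m)%N = ~~ (m < k)%N); last by rewrite -leqNgt; apply/idP/idP; lia.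
case: ltnP => [lt_mk | le_km] /=; first by congr (hc _); lia.
by rewrite (_ : (2 * m - 2 * k == 1)%N = false) //; apply/eqP; lia.
Qed.

End LaurentSeries.

Section Determination.
Context {R : realType}.
Local Notation C := R[i].
Implicit Types hc : nat -> C.

Lemma abser_agree hc hc' (a b : {poly C}) s (n : int) : (size b <= s)%N ->
  (forall l : nat, (0 < l)%N -> l%:Z + n <= (2 * s)%N%:Z - 2 -> hc l = hc' l) ->
  abser hc a b n = abser hc' a b n.
Proof.
move=> size_b agree; rewrite /abser /spolymul; congr (_ + _); apply: eq_bigr => i _.
have lt_is := leq_trans (ltn_ord i) size_b; case E: (n - _) => [x|x] //=.
by rewrite agree //; rewrite NegzE in E; lia.
Qed.

Lemma Vmat_dep hc hc' k :
  (forall l, (1 <= l <= k.*2.+1)%N -> hc l = hc' l) -> Vmat hc k.*2.+1 = Vmat hc' k.*2.+1.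
Proof.
move=> agree; set V := Vmat hc k.*2.+1.
have [size_P size_Q] := size_Vmat_top hc k.
have size_B : (size (V 1 1)%R <= k.+1)%N by rewrite Vmat11 size_polyN.
have shift a (b : {poly C}) (n : int) :
    (size b <= k.+1)%N -> -1 <= n -> abser hc a b n = abser hc' a b n.
  move=> size_b n_ge; apply: abser_agree size_b _ => l l_gt0 l_le.
  by apply: agree; lia.
have top (n : nat) : abser hc' (V 0 0) (V 0 1) n = Hser hc' k.*2.+1 n.
  by rewrite -shift // -Hser_Vmat !Hser_nat.
have [top0 top1] : Vmat hc' k.*2.+1 0 0 = V 0 0 /\ Vmat hc' k.*2.+1 0 1 = V 0 1.
  by apply: (abser_inj hc') => n; rewrite -Hser_Vmat top.
have coef1 : coefneg (Hser hc k.*2.+1) 1 = coefneg (Hser hc' k.*2.+1) 1.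
  by rewrite /coefneg !Hser_Vmat top0 top1 shift.
symmetry; apply: Vmat_eq => // n; rewrite -shift // -row2ser_Vmat !row2ser_nat coef1.
by case: ifP => // lt_n; rewrite agree //; lia.
Qed.

Lemma hc_even_determined hc hc' i :
  Vmat hc i.*2.+1 = Vmat hc' i.*2.+1 -> Vmat hc i.*2.+3 = Vmat hc' i.*2.+3 ->
  (forall l, (0 < l <= i.*2.+1)%N -> hc l = hc' l) -> hc i.*2.+2 = hc' i.*2.+2.
Proof.
move=> V1 V3 agree.
have coef0 (g : nat -> C) : (Vmat g i.*2.+3 0 0)`_0 =
    - (\sum_(t < i) (Vmat g i.*2.+1 0 1)`_t * g (2 * t + 1).+1 + g i.*2.+2).
  have [-> _] := Vmat_top_rec g i.*2.+1.
  rewrite coefB coefMX coefC sub0r (coefneg_Hser _ _ _ i.+1) ?(size_Vmat_top g i).2 //.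
  by rewrite big_ord_recr lead_Vmat01 mul1r addn1 mul2n.
have lower : \sum_(t < i) (Vmat hc' i.*2.+1 0 1)`_t * hc (2 * t + 1).+1 =
              \sum_(t < i) (Vmat hc' i.*2.+1 0 1)`_t * hc' (2 * t + 1).+1.
  by apply: eq_bigr => t _; rewrite agree //; move: (ltn_ord t); lia.
by have := coef0 hc; rewrite V3 V1 coef0 lower => /oppr_inj /addrI.
Qed.

Lemma hc_odd_determined hc hc' i :
  Vmat hc i.*2.+1 = Vmat hc' i.*2.+1 ->
  (forall l, (0 < l <= i.*2)%N -> hc l = hc' l) -> hc i.*2.+1 = hc' i.*2.+1.
Proof.
move=> V1 agree.
have row0 (g : nat -> C) : row2ser g i.*2.+1 0 =
    g i.*2.+1 *+ 2 + \sum_(t < i) (Vmat g i.*2.+1 0 1)`_t * g (2 * t + 0).+1.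
  rewrite row2ser_nat (coefneg_Hser _ _ _ i.+1) ?(size_Vmat_top g i).2 //.
  rewrite big_ord_recr lead_Vmat01 /= subn0 addn0 [(2 * i)%N]mul2n.
  by rewrite add0r mul1r mulr1 mulr2n addrCA [LHS]addrC.
have lower : \sum_(t < i) (Vmat hc' i.*2.+1 0 1)`_t * hc (2 * t + 0).+1 =
              \sum_(t < i) (Vmat hc' i.*2.+1 0 1)`_t * hc' (2 * t + 0).+1.
  by apply: eq_bigr => t _; rewrite agree //; move: (ltn_ord t); lia.
have size_B : (size (Vmat hc' i.*2.+1 1 1)%R <= i.+1)%N.
  by rewrite Vmat11 size_polyN; have [] := size_Vmat_top hc' i.
have := row0 hc; rewrite row2ser_Vmat V1 (abser_agree _ hc' _ _ _ _ size_B); last first.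
  by move=> l l_gt0 l_le; apply: agree; lia.
rewrite -row2ser_Vmat row0 lower => /addIr.
by move/eqP; rewrite -subr_eq0 -mulrnBl mulrn_eq0 /= subr_eq0 => /eqP.
Qed.

Lemma Vmat_inj hc hc' k : Vmat hc k.*2.+1 = Vmat hc' k.*2.+1 ->
  forall l, (1 <= l <= k.*2.+1)%N -> hc l = hc' l.
Proof.
move=> Vk; have Vi i : (i <= k)%N -> Vmat hc i.*2.+1 = Vmat hc' i.*2.+1.
  by move=> le_ik; rewrite (Vmat_posproj hc i k le_ik) (Vmat_posproj hc' i k le_ik) /alpha Vk.
suff agree_upto i : (i <= k)%N -> forall l, (0 < l <= i.*2.+1)%N -> hc l = hc' l.
  exact: agree_upto.
elim: i => [|i IH] le_ik l /andP[l_gt0 l_le].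
  have -> : l = 0.*2.+1 by lia.
  by apply: hc_odd_determined (Vi 0%N le_ik) _ => l' /andP[? ?]; exfalso; lia.
have agree_even l' : (0 < l' <= i.*2.+2)%N -> hc l' = hc' l'.
  move=> /andP[l'_gt0 l'_le]; have [lt_l' | ge_l'] := ltnP l' i.*2.+2.
    by apply: IH (ltnW le_ik) _ _; apply/andP; split; lia.
  have -> : l' = i.*2.+2 by lia.
  exact: hc_even_determined (Vi i (ltnW le_ik)) (Vi i.+1 le_ik) (IH (ltnW le_ik)).
have [lt_l | ge_l] := ltnP l i.*2.+3; first by apply: agree_even; apply/andP; split; lia.
have -> : l = (i.+1).*2.+1 by lia.
exact: hc_odd_determined (Vi i.+1 le_ik) agree_even.
Qed.

End Determination.

Theorem mainTheorem1 (R : realType) (k : nat) :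
  (* (1) dependence only on h_1..h_{2k+1}, and injectivity *)
  (forall hc hc' : nat -> R[i],
      (forall l, (1 <= l <= k.*2.+1)%N -> hc l = hc' l) ->
      Vmat hc k.*2.+1 = Vmat hc' k.*2.+1) /\
  (forall hc hc' : nat -> R[i],
      Vmat hc k.*2.+1 = Vmat hc' k.*2.+1 ->
      forall l, (1 <= l <= k.*2.+1)%N -> hc l = hc' l) /\
  (* (2) trace zero *)
  (forall hc : nat -> R[i], \tr (Vmat hc k.*2.+1) = 0) /\
  (* (3) *)
  (forall (hc : nat -> R[i]) (i : nat), (i <= k)%N ->
      Vmat hc i.*2.+1 =
      posproj (k - i) (Vmat hc k.*2.+1) - (alpha hc i k)%:P *: E21 R).
Proof.
split; first by move=> hc hc'; apply: Vmat_dep.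
split; first by move=> hc hc'; apply: Vmat_inj.
split=> [hc | hc i le_ik]; last exact: Vmat_posproj.
by rewrite mxtrace2 Vmat11 subrr.
Qed.
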